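(* Let $G$ be a multiplicatively written Abelian group with identity $e$, $\phi$ a height on $G$, $\alpha\in G$, and $a\ge0$. Suppose there is a set $S\subseteq G$ containing $e$ with $\phi(S)$ finite such that $S$ replaces $G$ at every $t\in(a,\infty)$. Then there exist $s\in[a,\infty)$ and $\mathbf M\in\mathbb R^\infty$ such that $\phi_t(\alpha)=\|\mathbf M\|_t$ for all $t\in(s,\infty)$. Consequently there is a finite set $\mathcal X\subseteq\mathbb R^\infty$ with $\phi_t(\alpha)=\min\{\|\mathbf x\|_t:\mathbf x\in\mathcal X\}$ for all $t\in(a,\infty)$.
   Context: A height on $G$ is a map $\phi:G\to[0,\infty)$ with $\phi(e)=0$ and $\phi(\beta)=\phi(\beta^{-1})$. For $S\ni e$, $S^\infty$ is the set of sequences in $S$ with all but finitely many terms equal to $e$. $\mathbb R^\infty$ is the set of finitely supported real sequences, $\|\mathbf x\|_t=(\sum_n|x_n|^t)^{1/t}$. $\phi_t(\alpha)=\inf\{\|(\phi(\alpha_1),\phi(\alpha_2),\ldots)\|_t:(\alpha_n)\in G^\infty,\ \prod_n\alpha_n=\alpha\}$. $S$ replaces $G$ at $t$ if $\phi_t(\alpha)$ equals the same infimum restricted to sequences in $S^\infty$ with product $\alpha$. *)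

From Stdlib Require Import Reals Lra List ClassicalEpsilon.
Open Scope R_scope.

Record AbGroup := {
  carrier :> Type;
  gmul : carrier -> carrier -> carrier;
  ginv : carrier -> carrier;
  gid : carrier;
  gmulA : forall x y z, gmul x (gmul y z) = gmul (gmul x y) z;
  gmulC : forall x y, gmul x y = gmul y x;
  gmul1 : forall x, gmul gid x = x;
  gmulV : forall x, gmul (ginv x) x = gid
}.

Definition is_height (G : AbGroup) (phi : G -> R) : Prop :=
  phi (gid G) = 0 /\ (forall b, 0 <= phi b) /\ (forall b, phi b = phi (ginv G b)).

Fixpoint gprod (G : AbGroup) (a : nat -> G) (N : nat) : G :=
  match N with
  | O => gid G
  | S k => gmul G (gprod G a k) (a k)
  end.

(* x^t for x >= 0, t > 0 (with 0^t = 0). *)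
Definition rpow (x t : R) : R :=
  if Rlt_dec 0 x then Rpower x t else 0.

Fixpoint rsum (f : nat -> R) (N : nat) : R :=
  match N with O => 0 | S k => rsum f k + f k end.

(* ||x||_t for a real sequence x supported in {0,...,N-1}. *)
Definition lp_norm (t : R) (x : nat -> R) (N : nat) : R :=
  rpow (rsum (fun n => rpow (Rabs (x n)) t) N) (1 / t).

Definition decomp_vals (G : AbGroup) (phi : G -> R) (S : G -> Prop)
    (t : R) (alpha : G) (v : R) : Prop :=
  exists (a : nat -> G) (N : nat),
    (forall n, S (a n)) /\
    (forall n, (N <= n)%nat -> a n = gid G) /\
    gprod G a N = alpha /\
    v = lp_norm t (fun n => phi (a n)) N.

Definition is_lower_bound (E : R -> Prop) (m : R) : Prop :=
  forall x, E x -> m <= x.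
Definition is_glb (E : R -> Prop) (m : R) : Prop :=
  is_lower_bound E m /\ (forall b, is_lower_bound E b -> b <= m).

(* Infimum (classical choice; only meaningful when a glb exists). *)
Definition Rinf (E : R -> Prop) : R :=
  proj1_sig (constructive_indefinite_description (fun m => is_glb E m \/ ~ (exists m', is_glb E m'))
    (match classic (exists m', is_glb E m') with
     | or_introl H => let (m, Hm) := H in ex_intro _ m (or_introl Hm)
     | or_intror H => ex_intro _ 0 (or_intror H)
     end)).

Definition phi_t (G : AbGroup) (phi : G -> R) (t : R) (alpha : G) : R :=
  Rinf (decomp_vals G phi (fun _ => True) t alpha).

Definition replaces (G : AbGroup) (phi : G -> R) (S : G -> Prop) (t : R) (alpha : G) : Prop :=
  is_glb (decomp_vals G phi S t alpha) (phi_t G phi t alpha).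

From Stdlib Require Import Reals List Lra Lia Classical Wf_nat.
Open Scope R_scope.

(* Let L be the finite list of heights of elements of S.  An S-decomposition d of
   alpha is described, as far as norms go, by the multiplicity vector
   (m_d(v))_{v in L} counting factors of height v, since ||d||_t^t = sum_v m_d(v) |v|^t.
   1. Dickson's lemma (nat^L is well-quasi-ordered) yields a finite list X of
      S-decompositions such that every S-decomposition has coordinatewise larger
      multiplicities than some member of X; hence, where S replaces G,
      phi_t(alpha) = min_{x in X} ||x||_t.  So the norms of any two
      members of X are eventually comparable, and a single member of X is the
      minimum for all large t. *)

Lemma rpow_nonneg x t : 0 <= rpow x t.
Proof.
  unfold rpow; destruct (Rlt_dec 0 x); [left; apply exp_pos | lra].
Qed.

Lemma rpow_nonpos x t : x <= 0 -> rpow x t = 0.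
Proof. intros; unfold rpow; destruct (Rlt_dec 0 x); lra. Qed.

Lemma rpow_le_base x y s : 0 <= x <= y -> 0 < s -> rpow x s <= rpow y s.
Proof.
  intros Hxy Hs. destruct (Rle_lt_or_eq_dec 0 x (proj1 Hxy)) as [Hx | <-].
  - unfold rpow. destruct (Rlt_dec 0 x); [|lra]. destruct (Rlt_dec 0 y); [|lra].
    apply Rle_Rpower_l; lra.
  - rewrite rpow_nonpos by lra. apply rpow_nonneg.
Qed.

Definition eventually (P : R -> Prop) : Prop := exists s, forall t, s < t -> P t.

Lemma eventually_and (P Q : R -> Prop) :
  eventually P -> eventually Q -> eventually (fun t => P t /\ Q t).
Proof.
  intros [s1 H1] [s2 H2]. exists (Rmax s1 s2). intros t Ht. split.
  - apply H1. eapply Rle_lt_trans; [apply Rmax_l | exact Ht].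
  - apply H2. eapply Rle_lt_trans; [apply Rmax_r | exact Ht].
Qed.

Lemma rpow_eventually_small c b B eps : 0 < eps -> 0 <= b < B ->
  eventually (fun t => Rabs c * rpow b t <= eps * rpow B t).
Proof.
  intros Heps Hb. destruct (Rle_lt_or_eq_dec 0 b (proj1 Hb)) as [Hb0 | <-].
  - assert (Hln : ln b < ln B) by (apply ln_increasing; lra).
    exists ((ln (Rabs c + 1) - ln eps) / (ln B - ln b)). intros t Ht.
    assert (Hgap : ln (Rabs c + 1) - ln eps < t * (ln B - ln b)).
    { apply (Rmult_lt_compat_r (ln B - ln b)) in Ht; [|lra].
      unfold Rdiv in Ht. rewrite Rmult_assoc, Rinv_l, Rmult_1_r in Ht by lra. lra. }
    assert (Hexp : exp (ln (Rabs c + 1) + t * ln b) < exp (ln eps + t * ln B))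
      by (apply exp_increasing; lra).
    pose proof (Rabs_pos c).
    rewrite !exp_plus, !exp_ln in Hexp by lra.
    unfold rpow, Rpower. destruct (Rlt_dec 0 b); [|lra]. destruct (Rlt_dec 0 B); [|lra].
    pose proof (exp_pos (t * ln b)). nra.
  - exists 0. intros t _. rewrite (rpow_nonpos 0) by lra.
    pose proof (rpow_nonneg B t). nra.
Qed.

(* Generalized exponential sums  t |-> sum_i c_i b_i^t  given by the list of pairs (c_i, b_i). *)
Definition Esum (l : list (R * R)) (t : R) : R :=
  fold_right (fun p acc => fst p * rpow (snd p) t + acc) 0 l.

Definition csum (l : list (R * R)) : R := fold_right (fun p acc => fst p + acc) 0 l.

Lemma Esum_eventually_small B l : forall eps, 0 < eps ->
  (forall p, In p l -> 0 <= snd p < B) ->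
  eventually (fun t => Rabs (Esum l t) <= eps * rpow B t).
Proof.
  induction l as [|p l IH]; intros eps Heps Hb; simpl.
  - exists 0. intros t _. rewrite Rabs_R0. pose proof (rpow_nonneg B t). nra.
  - destruct (eventually_and _ _
      (rpow_eventually_small (fst p) (snd p) B (eps / 2) ltac:(lra) (Hb p (or_introl eq_refl)))
      (IH (eps / 2) ltac:(lra) (fun q Hq => Hb q (or_intror Hq)))) as [s Hs].
    exists s. intros t Ht. destruct (Hs t Ht) as [Hhead Htail].
    eapply Rle_trans; [apply Rabs_triang |].
    rewrite Rabs_mult, (Rabs_right (rpow _ _)) by (apply Rle_ge, rpow_nonneg). lra.
Qed.

Lemma Esum_filter (f : R * R -> bool) l t :
  Esum l t = Esum (filter f l) t + Esum (filter (fun p => negb (f p)) l) t.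
Proof. induction l as [|p l IH]; simpl; [lra|]. destruct (f p); simpl; rewrite IH; lra. Qed.

Lemma Esum_const_base l t B : (forall p, In p l -> snd p = B) -> Esum l t = csum l * rpow B t.
Proof.
  induction l as [|p l IH]; simpl; intros H; [lra|].
  rewrite H, IH by auto. lra.
Qed.

Lemma list_argmin {T : Type} (g : T -> R) (l : list T) :
  l <> nil -> exists x, In x l /\ forall y, In y l -> g x <= g y.
Proof.
  induction l as [|y l IH]; intros Hne; [congruence|].
  destruct l as [|y' l'].
  - exists y. split; [left; auto|]. intros z [<- | []]; lra.
  - destruct IH as [x1 [Hx1 H1]]; [congruence|].
    destruct (Rle_dec (g y) (g x1)).
    + exists y. split; [left; auto|]. intros z [<- | Hz]; [lra|]. specialize (H1 z Hz). lra.
    + exists x1. split; [right; auto|]. intros z [<- | Hz]; [lra | auto].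
Qed.

(* Eventual sign: separate the terms with the largest base B; if their coefficients
   cancel, recurse on the remaining (shorter) sum, otherwise they dominate. *)
Lemma Esum_eventual_sign l : (forall p, In p l -> 0 <= snd p) ->
  eventually (fun t => 0 <= Esum l t) \/ eventually (fun t => Esum l t <= 0).
Proof.
  remember (length l) as n eqn:Hn. revert l Hn.
  induction n as [n IH] using lt_wf_ind. intros l Hn Hpos.
  destruct l as [|q l'].
  { left. exists 0. intros. simpl. lra. }
  set (l := q :: l') in *.
  destruct (list_argmin (fun p => - snd p) l) as [p0 [Hp0 Hmax]]; [discriminate|].
  set (B := snd p0).
  set (at_B := fun p : R * R => if Req_dec_T (snd p) B then true else false).
  set (l1 := filter at_B l). set (l2 := filter (fun p => negb (at_B p)) l).
  assert (Hsplit : forall t, Esum l t = csum l1 * rpow B t + Esum l2 t).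
  { intros t. rewrite (Esum_filter at_B). fold l1 l2.
    rewrite (Esum_const_base l1 t B); [reflexivity|].
    intros p Hp. apply filter_In in Hp. unfold at_B in Hp.
    destruct (Req_dec_T (snd p) B); [auto | easy]. }
  assert (Hl2 : forall p, In p l2 -> 0 <= snd p < B).
  { intros p Hp. apply filter_In in Hp. destruct Hp as [Hp Hnot]. unfold at_B in Hnot.
    destruct (Req_dec_T (snd p) B); [easy|].
    specialize (Hmax p Hp). specialize (Hpos p Hp). unfold B in *. split; lra. }
  destruct (Req_dec_T (csum l1) 0) as [Hcancel | Hlead].
  - assert (Hlen : (length l2 < n)%nat).
    { assert (Hp0B : In p0 l1).
      { apply filter_In. split; [auto|]. unfold at_B. destruct (Req_dec_T (snd p0) B); easy. }
      pose proof (filter_length at_B l) as Hlen. fold l1 l2 in Hlen. rewrite <- Hn in Hlen.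
      destruct l1 as [|x l1']; [contradiction|]. simpl in Hlen. lia. }
    assert (Hpos2 : forall p, In p l2 -> 0 <= snd p) by (intros p Hp; apply Hl2; auto).
    destruct (IH _ Hlen l2 eq_refl Hpos2) as [[s Hs] | [s Hs]]; [left | right];
      exists s; intros t Ht; rewrite Hsplit, Hcancel; specialize (Hs t Ht); lra.
  - destruct (Esum_eventually_small B l2 (Rabs (csum l1)) (Rabs_pos_lt _ Hlead) Hl2) as [s Hs].
    (* |Esum l2 t| <= |csum l1| B^t, so Esum l t has the sign of csum l1. *)
    destruct (Rlt_dec 0 (csum l1)); [left | right]; exists s; intros t Ht;
      rewrite Hsplit; specialize (Hs t Ht);
      pose proof (Rle_abs (Esum l2 t)); pose proof (Rle_abs (- Esum l2 t));
      rewrite Rabs_Ropp in *;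
      [rewrite (Rabs_right (csum l1)) in Hs by lra | rewrite (Rabs_left (csum l1)) in Hs by lra];
      nra.
Qed.

Section Dickson.

Variable A : Type.
Hypothesis A_eq_dec : forall x y : A, {x = y} + {x <> y}.

Definition dominates {T : Type} (f : T -> A -> nat) (J : list A) (x c : T) : Prop :=
  forall j, In j J -> (f x j <= f c j)%nat.

Definition has_finite_basis {T : Type} (C : T -> Prop) (f : T -> A -> nat) (J : list A) : Prop :=
  exists X, (forall x, In x X -> C x) /\
    forall c, C c -> exists x, In x X /\ dominates f J x c.

(* Inductive step of Dickson's lemma: if shorter coordinate lists have finite bases,
   then so does each slice {c | f c j = v} (basis for J minus j, plus the constant
   coordinate j), and hence any finite union of such slices. *)
Lemma slices_have_finite_basis (J : list A)
  (IH : forall J', (length J' < length J)%nat ->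
        forall (T : Type) (C : T -> Prop) (f : T -> A -> nat), has_finite_basis C f J')
  (T : Type) (C : T -> Prop) (f : T -> A -> nat) (l : list (A * nat)) :
  (forall p, In p l -> In (fst p) J) ->
  exists X, (forall x, In x X -> C x) /\
    forall p, In p l -> forall c, C c -> f c (fst p) = snd p ->
      exists x, In x X /\ dominates f J x c.
Proof.
  induction l as [|[j v] l IHl]; intros Hl.
  { exists nil. split; intros ? []. }
  destruct IHl as [X2 [HX2 HX2dom]]; [intros; apply Hl; right; auto|].
  destruct (IH (remove A_eq_dec j J) (remove_length_lt A_eq_dec J j (Hl (j, v) (or_introl eq_refl)))
              T (fun c => C c /\ f c j = v) f) as [X1 [HX1 HX1dom]].
  exists (X1 ++ X2). split.
  - intros x Hx. apply in_app_or in Hx as [Hx | Hx]; [apply HX1 | apply HX2]; auto.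
  - intros p [<- | Hp] c Hc Hfc.
    + destruct (HX1dom c (conj Hc Hfc)) as [x [Hx Hdom]].
      exists x. split; [apply in_or_app; left; auto|]. intros j' Hj'.
      destruct (A_eq_dec j' j) as [-> | Hne].
      * destruct (HX1 x Hx) as [_ Hxj]. simpl in Hfc. lia.
      * apply Hdom, in_in_remove; auto.
    + destruct (HX2dom p Hp c Hc Hfc) as [x [Hx Hdom]].
      exists x. split; [apply in_or_app; right|]; auto.
Qed.

(* Induction on |J|: fix any c0 in C;
   every c not dominating c0 lies in a slice f c j = v with v < f c0 j. *)
Lemma dickson (J : list A) (T : Type) (C : T -> Prop) (f : T -> A -> nat) :
  has_finite_basis C f J.
Proof.
  remember (length J) as n eqn:Hn. revert J Hn T C f.
  induction n as [n IHn] using lt_wf_ind. intros J Hn T C f. subst n.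
  destruct (classic (exists c0, C c0)) as [[c0 Hc0] | Hempty].
  2:{ exists nil. split; [intros ? [] | intros c Hc; exfalso; eauto]. }
  set (below_c0 := flat_map (fun j => map (fun v => (j, v)) (seq 0 (f c0 j))) J).
  destruct (slices_have_finite_basis J (fun J' HJ' => IHn _ HJ' J' eq_refl) T C f below_c0)
    as [X [HX HXdom]].
  { intros p Hp. apply in_flat_map in Hp as [j [Hj Hp]].
    apply in_map_iff in Hp as [v [<- _]]. auto. }
  exists (c0 :: X). split; [intros x [<- | Hx]; auto|].
  intros c Hc. destruct (classic (dominates f J c0 c)) as [Hdom | Hnot].
  - exists c0. split; [left|]; auto.
  - apply not_all_ex_not in Hnot as [j Hj]. apply imply_to_and in Hj as [Hj Hlt].
    destruct (HXdom (j, f c j)) with (c := c) as [x [Hx Hdom]]; auto.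
    + apply in_flat_map. exists j. split; auto.
      apply in_map_iff. exists (f c j). split; auto. apply in_seq. lia.
    + exists x. split; [right|]; auto.
Qed.

End Dickson.

Lemma eventual_argmin {T : Type} (g : R -> T -> R) (l : list T) : l <> nil ->
  (forall x y, In x l -> In y l ->
     eventually (fun t => g t x <= g t y) \/ eventually (fun t => g t y <= g t x)) ->
  exists x0, In x0 l /\ eventually (fun t => forall y, In y l -> g t x0 <= g t y).
Proof.
  induction l as [|y l IH]; intros Hne Hcmp; [congruence|].
  destruct l as [|y' l'].
  { exists y. split; [left; auto|]. exists 0. intros t _ z [<- | []]. lra. }
  destruct IH as [x1 [Hx1 Hmin1]]; [congruence | intros; apply Hcmp; right; auto |].
  assert (Hy : In y (y :: y' :: l')) by (left; auto).
  assert (Hx1' : In x1 (y :: y' :: l')) by (right; auto).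
  destruct (Hcmp y x1 Hy Hx1') as [Hyx | Hxy].
  - exists y. split; [left; auto|].
    destruct (eventually_and _ _ Hyx Hmin1) as [s Hs]. exists s. intros t Ht z [<- | Hz].
    + lra.
    + destruct (Hs t Ht) as [Hyx1 Hx1z]. specialize (Hx1z z Hz). lra.
  - exists x1. split; [right; auto|].
    destruct (eventually_and _ _ Hxy Hmin1) as [s Hs]. exists s.
    intros t Ht z [<- | Hz]; destruct (Hs t Ht) as [Hx1y Hx1z]; auto.
Qed.

Definition lsum (g : R -> R) (l : list R) : R := fold_right (fun v acc => g v + acc) 0 l.

Lemma lsum_ext g1 g2 l : (forall v, In v l -> g1 v = g2 v) -> lsum g1 l = lsum g2 l.
Proof. induction l as [|v l IH]; simpl; intros H; auto. rewrite H, IH; auto. Qed.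

Lemma lsum_plus g1 g2 l : lsum (fun v => g1 v + g2 v) l = lsum g1 l + lsum g2 l.
Proof. induction l as [|v l IH]; simpl; [|rewrite IH]; lra. Qed.

Lemma lsum_le g1 g2 l : (forall v, In v l -> g1 v <= g2 v) -> lsum g1 l <= lsum g2 l.
Proof.
  induction l as [|v l IH]; simpl; intros H; [lra|].
  pose proof (H v (or_introl eq_refl)). pose proof (IH (fun w Hw => H w (or_intror Hw))). lra.
Qed.

Lemma lsum_zero l : lsum (fun _ => 0) l = 0.
Proof. induction l as [|v l IH]; simpl; [|rewrite IH]; lra. Qed.

Lemma lsum_indicator (g : R -> R) w l : NoDup l -> In w l ->
  lsum (fun v => (if Req_dec_T w v then 1 else 0) * g v) l = g w.
Proof.
  induction l as [|v l IH]; simpl; intros Hnd Hw; [contradiction|].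
  inversion Hnd as [|? ? Hv Hnd']; subst.
  destruct (Req_dec_T w v) as [-> | Hne].
  - rewrite (lsum_ext _ (fun _ => 0)), lsum_zero; [lra|].
    intros u Hu. destruct (Req_dec_T v u); [subst; contradiction | lra].
  - destruct Hw as [-> | Hw]; [contradiction|]. rewrite IH; auto. lra.
Qed.

Lemma Esum_map_sub (c1 c2 b : R -> R) l t :
  Esum (map (fun v => (c1 v - c2 v, b v)) l) t =
  lsum (fun v => c1 v * rpow (b v) t) l - lsum (fun v => c2 v * rpow (b v) t) l.
Proof. induction l as [|v l IH]; simpl; [|rewrite IH]; lra. Qed.

Lemma rsum_nonneg f N : (forall n, 0 <= f n) -> 0 <= rsum f N.
Proof. intros H; induction N as [|N IH]; simpl; [lra|]. specialize (H N). lra. Qed.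

Fixpoint multiplicity (f : nat -> R) (N : nat) (v : R) : nat :=
  match N with
  | O => O
  | S k => (multiplicity f k v + if Req_dec_T (f k) v then 1 else 0)%nat
  end.

Lemma rsum_by_values (g : R -> R) f N L : NoDup L -> (forall n, (n < N)%nat -> In (f n) L) ->
  rsum (fun n => g (f n)) N = lsum (fun v => INR (multiplicity f N v) * g v) L.
Proof.
  intros Hnd. induction N as [|N IH]; intros HL; simpl.
  - rewrite (lsum_ext _ (fun _ => 0)), lsum_zero; [reflexivity | intros; simpl; lra].
  - rewrite IH by (intros; apply HL; lia).
    rewrite <- (lsum_indicator g (f N) L Hnd (HL N ltac:(lia))), <- lsum_plus.
    apply lsum_ext. intros v _. rewrite plus_INR.
    destruct (Req_dec_T (f N) v); simpl; lra.
Qed.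

Section Decompositions.

Variables (G : AbGroup) (phi : G -> R) (S : G -> Prop) (alpha : G).

Definition decomposition : Type := ((nat -> G) * nat)%type.

Definition is_decomp (d : decomposition) : Prop :=
  (forall n, S (fst d n)) /\ (forall n, (snd d <= n)%nat -> fst d n = gid G) /\
  gprod G (fst d) (snd d) = alpha.

Definition heights (d : decomposition) (n : nat) : R := phi (fst d n).

Definition power_sum (t : R) (d : decomposition) : R :=
  rsum (fun n => rpow (Rabs (heights d n)) t) (snd d).

Definition dnorm (t : R) (d : decomposition) : R := lp_norm t (heights d) (snd d).

Definition height_multiplicity (d : decomposition) (v : R) : nat :=
  multiplicity (heights d) (snd d) v.

Lemma decomp_vals_iff t v :
  decomp_vals G phi S t alpha v <-> exists d, is_decomp d /\ v = dnorm t d.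
Proof.
  split.
  - intros [f [N [HS [Htail [Hprod ->]]]]]. exists (f, N). repeat split; auto.
  - intros [[f N] [[HS [Htail Hprod]] ->]]. exists f, N. repeat split; auto.
Qed.

Lemma dnorm_le_of_power_sum_le t x y : 0 < t ->
  power_sum t x <= power_sum t y -> dnorm t x <= dnorm t y.
Proof.
  intros Ht Hle. apply rpow_le_base; [split; auto | apply Rdiv_lt_0_compat; lra].
  apply rsum_nonneg. intros; apply rpow_nonneg.
Qed.

Lemma heights_support d : phi (gid G) = 0 -> is_decomp d ->
  forall n, (snd d <= n)%nat -> heights d n = 0.
Proof. intros He [_ [Htail _]] n Hn. unfold heights. rewrite Htail; auto. Qed.

(* Where S replaces G, alpha has an S-decomposition: the empty set has no
   greatest lower bound in R. *)
Lemma decomp_exists t : replaces G phi S t alpha -> exists d, is_decomp d.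
Proof.
  intros [_ Hgreatest]. apply NNPP. intros Hnone.
  assert (Hvac : phi_t G phi t alpha + 1 <= phi_t G phi t alpha).
  { apply Hgreatest. intros v Hv. apply decomp_vals_iff in Hv as [d [Hd _]].
    exfalso. apply Hnone. eauto. }
  lra.
Qed.

Variable L : list R.
Hypothesis L_nodup : NoDup L.
Hypothesis L_heights : forall s, S s -> In (phi s) L.

Lemma power_sum_by_values t d : is_decomp d ->
  power_sum t d = lsum (fun v => INR (height_multiplicity d v) * rpow (Rabs v) t) L.
Proof.
  intros [HS _]. apply (rsum_by_values (fun v => rpow (Rabs v) t)); [exact L_nodup|].
  intros n _. apply L_heights, HS.
Qed.

Lemma dnorm_le_of_dominates t x c : 0 < t -> is_decomp x -> is_decomp c ->
  dominates R height_multiplicity L x c -> dnorm t x <= dnorm t c.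
Proof.
  intros Ht Hx Hc Hdom. apply dnorm_le_of_power_sum_le; auto.
  rewrite (power_sum_by_values t x Hx), (power_sum_by_values t c Hc).
  apply lsum_le. intros v Hv.
  apply Rmult_le_compat_r; [apply rpow_nonneg | apply le_INR, Hdom; auto].
Qed.

(* The difference of two power sums is an exponential sum in t, so it has an
   eventual sign: the norms of two decompositions are eventually comparable. *)
Lemma dnorm_eventually_comparable x y : is_decomp x -> is_decomp y ->
  eventually (fun t => dnorm t x <= dnorm t y) \/ eventually (fun t => dnorm t y <= dnorm t x).
Proof.
  intros Hx Hy.
  set (diff := map (fun v => (INR (height_multiplicity y v) - INR (height_multiplicity x v), Rabs v)) L).
  assert (Hdiff : forall t, Esum diff t = power_sum t y - power_sum t x).
  { intros t. unfold diff. rewrite Esum_map_sub, !power_sum_by_values; auto. }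
  assert (Hpos : eventually (fun t => 0 < t)) by (exists 0; auto).
  destruct (Esum_eventual_sign diff) as [Hsign | Hsign].
  { intros p Hp. apply in_map_iff in Hp as [v [<- _]]. apply Rabs_pos. }
  - left. destruct (eventually_and _ _ Hpos Hsign) as [s Hs]. exists s. intros t Ht.
    destruct (Hs t Ht) as [Ht0 Hge]. rewrite Hdiff in Hge.
    apply dnorm_le_of_power_sum_le; lra.
  - right. destruct (eventually_and _ _ Hpos Hsign) as [s Hs]. exists s. intros t Ht.
    destruct (Hs t Ht) as [Ht0 Hle]. rewrite Hdiff in Hle.
    apply dnorm_le_of_power_sum_le; lra.
Qed.

Lemma phi_t_is_min_over_basis t X x0 : 0 < t -> replaces G phi S t alpha ->
  (forall x, In x X -> is_decomp x) ->
  (forall c, is_decomp c -> exists x, In x X /\ dominates R height_multiplicity L x c) ->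
  In x0 X -> (forall y, In y X -> dnorm t x0 <= dnorm t y) ->
  phi_t G phi t alpha = dnorm t x0.
Proof.
  intros Ht [Hlower Hgreatest] HXdec HXbasis Hx0 Hmin. apply Rle_antisym.
  - apply Hlower, decomp_vals_iff. eauto.
  - apply Hgreatest. intros v Hv. apply decomp_vals_iff in Hv as [c [Hc ->]].
    destruct (HXbasis c Hc) as [x [Hx Hdom]].
    apply Rle_trans with (dnorm t x); [apply Hmin; auto|].
    apply dnorm_le_of_dominates; auto.
Qed.

End Decompositions.

Theorem mainTheorem9 (G : AbGroup) (phi : G -> R) (alpha : G) (a : R)
  (Hphi : is_height G phi) (Ha : 0 <= a)
  (S : G -> Prop) (HSe : S (gid G))
  (HSfin : exists l : list R, forall s, S s -> In (phi s) l)
  (Hrep : forall t, a < t -> replaces G phi S t alpha) :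
  (exists (s : R) (M : nat -> R) (NM : nat),
     a <= s /\ (forall n, (NM <= n)%nat -> M n = 0) /\
     forall t, s < t -> phi_t G phi t alpha = lp_norm t M NM) /\
  (exists X : list ((nat -> R) * nat),
     (forall x, In x X -> forall n, (snd x <= n)%nat -> fst x n = 0) /\
     forall t, a < t ->
       exists x, In x X /\ phi_t G phi t alpha = lp_norm t (fst x) (snd x) /\
         forall y, In y X -> lp_norm t (fst x) (snd x) <= lp_norm t (fst y) (snd y)).
Proof.
  destruct HSfin as [L HL].
  set (Lv := nodup Req_dec_T L).
  assert (HLv : forall s, S s -> In (phi s) Lv) by (intros; apply nodup_In; auto).
  assert (Hnd : NoDup Lv) by apply NoDup_nodup.
  destruct (dickson R Req_dec_T Lv _ (is_decomp G S alpha) (height_multiplicity G phi))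
    as [X [HXdec HXbasis]].
  assert (HXne : X <> nil).
  { destruct (decomp_exists G phi S alpha (a + 1) (Hrep (a + 1) ltac:(lra))) as [d Hd].
    destruct (HXbasis d Hd) as [x [Hx _]]. intros ->. contradiction. }
  assert (Hmin : forall t, a < t -> forall x0, In x0 X ->
            (forall y, In y X -> dnorm G phi t x0 <= dnorm G phi t y) ->
            phi_t G phi t alpha = dnorm G phi t x0).
  { intros t Ht x0. apply (phi_t_is_min_over_basis G phi S alpha Lv); auto; lra. }
  assert (Hsupp : forall x, In x X -> forall n, (snd x <= n)%nat -> heights G phi x n = 0).
  { intros x Hx. apply (heights_support G phi S alpha); [apply Hphi | auto]. }
  split.
  -
    destruct (eventual_argmin (dnorm G phi) X HXne) as [x0 [Hx0 [s Hs]]].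
    { intros x y Hx Hy. apply (dnorm_eventually_comparable G phi S alpha Lv); auto. }
    exists (Rmax a s), (heights G phi x0), (snd x0).
    split; [apply Rmax_l | split; [auto|]].
    intros t Ht. apply Hmin; auto.
    + eapply Rle_lt_trans; [apply Rmax_l | exact Ht].
    + apply Hs. eapply Rle_lt_trans; [apply Rmax_r | exact Ht].
  -
    exists (map (fun d => (heights G phi d, snd d)) X). split.
    + intros x Hx. apply in_map_iff in Hx as [d [<- Hd]]. apply Hsupp; auto.
    + intros t Ht. destruct (list_argmin (dnorm G phi t) X HXne) as [x0 [Hx0 Hx0min]].
      exists (heights G phi x0, snd x0). split; [apply in_map_iff; eauto | split].
      * apply Hmin; auto.
      * intros y Hy. apply in_map_iff in Hy as [d [<- Hd]]. apply Hx0min; auto.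
Qed.
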